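(* Assume the setting in the context (Condition ASM), let $\widehat\beta$ be a LASSO solution, $\widehat T=\mathrm{support}(\widehat\beta)$, $\zeta:=\max_{1\leqslant j\leqslant p}|\widehat\beta_j-\beta_{0j}|$, and $\widehat m=|\widehat T\setminus T|$. Fix $c>1$, $\bar c=(c+1)/(c-1)$. (1) If $\min_{j\in T}|\beta_{0j}|>\zeta+t$ for some $t\geqslant\zeta$, then $T\subseteq\widehat T$ and moreover $T=\{j\in\{1,\dots,p\}:|\widehat\beta_j|>t\}$. (2) If $\lambda\geqslant c\,n\|S\|_\infty$, then $$\zeta\leqslant\Big(1+\frac1c\Big)\frac{\lambda\sqrt s}{n\,\kappa_{\bar c}\,\kappa(\widehat m)}+\frac{2c_s}{\kappa(\widehat m)}.$$ (3) If $\lambda\geqslant c\,n\|S\|_\infty$ and there is a constant $U>5\bar c$ such that $|\mathbb{E}_n[x_{ij}x_{ik}]|\leqslant 1/(Us)$ for all $1\leqslant j<k\leqslant p$, then $$\zeta\leqslant\frac{\lambda}{n}\cdot\frac{U+\bar c}{U-5\bar c}+\min\Big\{\frac{\sigma}{\sqrt n},c_s\Big\}+\frac{6\bar c}{U-5\bar c}\frac{c_s}{\sqrt s}+\frac{4\bar c}{U}\frac{n}{\lambda}\frac{c_s^2}{s}.$$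
   Context: Condition ASM: observations $(y_i,z_i)$, $i=1,\dots,n$, $z_i$ fixed, $y_i=f(z_i)+\varepsilon_i$ with $\varepsilon_i$ i.i.d. $N(0,\sigma^2)$. $f_i=f(z_i)$, $\mathbb{E}_n[a_i]=n^{-1}\sum_i a_i$, $x_i=P(z_i)\in\mathbb{R}^p$ (including a constant) normalized so $\mathbb{E}_n[x_{ij}^2]=1$. $\beta_0$ is any solution of $\min_\beta\mathbb{E}_n[(f_i-x_i'\beta)^2]+\sigma^2\|\beta\|_0/n$ ($\|\cdot\|_0$ = number of nonzeros); $s=\|\beta_0\|_0$, $T=\mathrm{support}(\beta_0)$, $r_i=f_i-x_i'\beta_0$, $c_s=\sqrt{\mathbb{E}_n[r_i^2]}\leqslant K\sigma\sqrt{s/n}$ for an absolute constant $K$. $\|\delta\|_{2,n}=\sqrt{\mathbb{E}_n[(x_i'\delta)^2]}$; $S=2\mathbb{E}_n[x_i\varepsilon_i]$; LASSO: $\widehat\beta\in\arg\min_\beta\mathbb{E}_n[(y_i-x_i'\beta)^2]+\frac\lambda n\|\beta\|_1$, $\lambda>0$. $\delta_A$ is $\delta$ with entries outside $A$ set to zero. Restricted eigenvalue: $\kappa_C=\min\{\sqrt s\|\delta\|_{2,n}/\|\delta_T\|_1:\|\delta_{T^c}\|_1\leqslant C\|\delta_T\|_1,\ \delta_T\neq0\}$. Minimal sparse eigenvalue: $\kappa(m)^2=\min\{\|\delta\|_{2,n}^2/\|\delta\|^2:\delta\neq0,\|\delta_{T^c}\|_0\leqslant m\}$. *)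

From HB Require Import structures.
From mathcomp Require Import all_boot all_order all_algebra.
From mathcomp Require Import classical_sets reals.
Set Implicit Arguments. Unset Strict Implicit. Unset Printing Implicit Defensive.
Import Order.TTheory GRing.Theory Num.Theory.
Local Open Scope ring_scope.
Local Open Scope classical_set_scope.

Section Defs.
Variables (R : realType) (n p : nat).

Definition En (a : 'I_n -> R) : R := (\sum_(i < n) a i) / n%:R.

Definition xdot (x : 'I_n -> 'I_p -> R) (i : 'I_n) (b : 'I_p -> R) : R :=
  \sum_(j < p) x i j * b j.

Definition supp (b : 'I_p -> R) : {set 'I_p} := [set j | b j != 0].
Definition l0 (b : 'I_p -> R) : nat := #|supp b|.
Definition l1 (b : 'I_p -> R) : R := \sum_(j < p) `|b j|.
Definition l2 (b : 'I_p -> R) : R := Num.sqrt (\sum_(j < p) b j ^+ 2).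
Definition linf (b : 'I_p -> R) : R := \big[Num.max/0]_(j < p) `|b j|.

Definition restr (A : {set 'I_p}) (d : 'I_p -> R) : 'I_p -> R :=
  fun j => if j \in A then d j else 0.

Definition norm2n (x : 'I_n -> 'I_p -> R) (d : 'I_p -> R) : R :=
  Num.sqrt (En (fun i => xdot x i d ^+ 2)).

Definition kappaC (x : 'I_n -> 'I_p -> R) (T : {set 'I_p}) (C : R) : R :=
  inf [set r : R | exists d : 'I_p -> R,
         [/\ l1 (restr (~: T) d) <= C * l1 (restr T d),
             (exists2 j, j \in T & d j != 0) &
             r = Num.sqrt (#|T|%:R) * norm2n x d / l1 (restr T d)]].

Definition kappa_sp (x : 'I_n -> 'I_p -> R) (T : {set 'I_p}) (m : nat) : R :=
  Num.sqrt (inf [set r : R | exists d : 'I_p -> R,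
         [/\ (exists j, d j != 0),
             (#|[set j in ~: T | d j != 0%R]| <= m)%N &
             r = norm2n x d ^+ 2 / l2 d ^+ 2]]).

End Defs.

(* Write d = betah - beta0, u_i = x_i'd and r_i = f_i - x_i'beta0.  Part (1) is the
   triangle inequality coordinatewise.  Comparing the LASSO objective at betah and at
   beta0 and bounding the noise term by ||S||_oo ||d||_1 <= (lambda/(c n)) ||d||_1 gives
   the cone inequality
     c (E_n[u^2] - 2 E_n[r u]) <= (lambda/n) ((c+1) ||d_T||_1 - (c-1) ||d_{T^c}||_1).
   For (2): inside the cone kappa_cbar bounds ||d_T||_1 by sqrt s ||d||_{2,n}, which
   yields a quadratic inequality for ||d||_{2,n}; outside the cone it is immediate.  As
   d_{T^c} is supported on That \ T, kappa(mhat) turns this into a bound on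
   ||d||_2 >= zeta.  For (3): the coordinatewise KKT conditions and the incoherence of
   the design give |d_j| <= |E_n[r x_j]| + ||S||_oo/2 + lambda/(2n) + ||d||_1/(U s);
   optimality of beta0 against one-coordinate perturbations makes E_n[r x_j] vanish on
   T and be at most min(sigma/sqrt n, c_s) off T, and the cone inequality bounds
   ||d||_1 by s times the same level, so the level satisfies a linear fixpoint
   inequality which is then solved. *)

From HB Require Import structures.
From mathcomp Require Import all_boot all_order all_algebra.
From mathcomp Require Import classical_sets reals.
From mathcomp Require Import ring lra.
Import Order.TTheory GRing.Theory Num.Theory.
Local Open Scope ring_scope.

Lemma norm_le_of_sqr_le (R : rcfType) (x y : R) :
  0 <= y -> x ^+ 2 <= y ^+ 2 -> `|x| <= y.
Proof. by move=> y0 le_xy; rewrite -sqrtr_sqr -(ger0_norm y0) -sqrtr_sqr ler_wsqrtr. Qed.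

Section RealArithmetic.
Context {R : realFieldType}.

Lemma discriminant_le (P E Q : R) :
  0 <= Q -> (forall t, 0 <= P - 2 * t * E + t ^+ 2 * Q) -> E ^+ 2 <= P * Q.
Proof.
move=> Q0 ge0; have [Qp|] := ltrP 0 Q.
  have := ge0 (E / Q).
  have -> : P - 2 * (E / Q) * E + (E / Q) ^+ 2 * Q = (P * Q - E ^+ 2) / Q.
    by field; rewrite gt_eqF.
  by rewrite pmulr_lge0 ?invr_gt0 // subr_ge0.
move=> Q_le0; have Q_eq0 : Q = 0 by apply/eqP; rewrite eq_le Q_le0 Q0.
rewrite Q_eq0 mulr0; have [->|E0] := eqVneq E 0; first by rewrite expr0n.
have := ge0 ((P + 1) / (2 * E)); rewrite Q_eq0 mulr0 addr0.
have -> : P - 2 * ((P + 1) / (2 * E)) * E = -1 by field.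
by rewrite ler0N1.
Qed.

Lemma subgradient_norm_le (H a : R) :
  (forall t, 0 <= t ^+ 2 - 2 * t * H + a * `|t|) -> `|H| <= a / 2.
Proof.
move=> ge0; rewrite ler_norml; apply/andP; split; rewrite leNgt; apply/negP => lt_Ha.
  have := ge0 (H + a / 2); rewrite ler0_norm; [nra | lra].
have := ge0 (H - a / 2); rewrite ger0_norm; [nra | lra].
Qed.

Lemma le_fixpoint_bound {Y A B q U : R} :
  1 <= q -> 5 * q < U -> 0 <= A -> 0 <= B ->
  Y <= A + ((1 + q) * Y + B) / U ->
  Y <= A * ((U + q) / (U - 5 * q)) + 4 * B / U.
Proof.
move=> q1 qU A0 B0; have U0 : 0 < U by lra.
have gap : 0 < U - 1 - q by lra.
move=> /(ler_wpM2r (ltW U0)); rewrite mulrDl divfK ?gt_eqF // => fixY.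
have {fixY} YU : Y * (U - 1 - q) <= A * U + B by lra.
have le_A : A * U <= A * ((U + q) / (U - 5 * q)) * (U - 1 - q).
  rewrite -mulrA ler_wpM2l // mulrAC ler_pdivlMr; nra.
have le_B : B <= 4 * B / U * (U - 1 - q).
  by rewrite mulrAC ler_pdivlMr //; nra.
rewrite -(ler_pM2r gap) mulrDl; lra.
Qed.

End RealArithmetic.

Section EmpiricalMean.
Context {R : realType} {n : nat}.
Implicit Types (a b w v : 'I_n -> R) (k : R).

Lemma eq_En a b : a =1 b -> En a = En b.
Proof. by move=> eq_ab; rewrite /En; congr (_ / _); apply: eq_bigr => i _. Qed.

Lemma EnD a b : En (fun i => a i + b i) = En a + En b.
Proof. by rewrite /En big_split /= mulrDl. Qed.

Lemma EnZ k a : En (fun i => k * a i) = k * En a.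
Proof. by rewrite /En -mulr_sumr mulrA. Qed.

Lemma EnB a b : En (fun i => a i - b i) = En a - En b.
Proof.
by rewrite (@eq_En _ (fun i => a i + (-1) * b i)) ?EnD ?EnZ => [|i]; ring.
Qed.

Lemma En_ge0 a : (forall i, 0 <= a i) -> 0 <= En a.
Proof.
move=> a_ge0; rewrite /En mulr_ge0 ?invr_ge0 ?ler0n //.
by apply: sumr_ge0 => i _.
Qed.

Lemma En_sqr_ge0 a : 0 <= En (fun i => a i ^+ 2).
Proof. by apply: En_ge0 => i; apply: sqr_ge0. Qed.

Lemma En_sum p (F : 'I_n -> 'I_p -> R) :
  En (fun i => \sum_(j < p) F i j) = \sum_(j < p) En (fun i => F i j).
Proof. by rewrite /En exchange_big /= mulr_suml. Qed.

Lemma En_sqrBZ w v k :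
  En (fun i => (w i - k * v i) ^+ 2) =
  En (fun i => w i ^+ 2) - 2 * k * En (fun i => w i * v i)
    + k ^+ 2 * En (fun i => v i ^+ 2).
Proof.
rewrite (@eq_En _ (fun i => (w i ^+ 2 + (- (2 * k)) * (w i * v i))
    + k ^+ 2 * v i ^+ 2)) => [|i]; last by ring.
by rewrite !EnD !EnZ; ring.
Qed.

Lemma En_mul_sqr_le w v :
  En (fun i => w i * v i) ^+ 2 <=
  En (fun i => w i ^+ 2) * En (fun i => v i ^+ 2).
Proof.
apply: discriminant_le; first exact: En_sqr_ge0.
by move=> t; rewrite -En_sqrBZ; apply: En_sqr_ge0.
Qed.

Lemma En_mul_le w v :
  En (fun i => w i * v i) <=
  Num.sqrt (En (fun i => w i ^+ 2)) * Num.sqrt (En (fun i => v i ^+ 2)).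
Proof.
rewrite -sqrtrM ?En_sqr_ge0 //; apply: le_trans (ler_norm _) _.
by rewrite -sqrtr_sqr ler_wsqrtr // En_mul_sqr_le.
Qed.

End EmpiricalMean.
Arguments eq_En {R n a b}.

Section Vectors.
Context {R : realType} {p : nat}.
Implicit Types (b d : 'I_p -> R) (A : {set 'I_p}).

Definition perturb b (j : 'I_p) (t : R) : 'I_p -> R :=
  fun k => b k + (if k == j then t else 0).

Lemma xdotB n (x : 'I_n -> 'I_p -> R) i b1 b2 :
  xdot x i (fun j => b1 j - b2 j) = xdot x i b1 - xdot x i b2.
Proof. by rewrite /xdot -sumrB; apply: eq_bigr => j _; rewrite mulrBr. Qed.

Lemma xdot_perturb n (x : 'I_n -> 'I_p -> R) i b j t :
  xdot x i (perturb b j t) = xdot x i b + t * x i j.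
Proof.
have coord : \sum_(k < p) x i k * (if k == j then t else 0) = t * x i j.
  by rewrite (bigD1 j) //= eqxx big1 => [|k /negbTE ->]; rewrite ?mulr0 ?addr0 // mulrC.
by rewrite /xdot -coord -big_split; apply: eq_bigr => k _; rewrite mulrDr.
Qed.

Lemma supp_perturb_in b j t :
  b j != 0 -> b j + t != 0 -> supp (perturb b j t) = supp b.
Proof.
move=> bj0 bjt0; apply/finset.setP => k; rewrite !inE /perturb.
by case: (eqVneq k j) => [->|_]; rewrite ?bj0 ?bjt0 ?addr0.
Qed.

Lemma supp_perturb_out b j t :
  b j = 0 -> t != 0 -> supp (perturb b j t) = j |: supp b.
Proof.
move=> bj0 t0; apply/finset.setP => k; rewrite !inE /perturb.
by case: (eqVneq k j) => [->|_] /=; rewrite ?bj0 ?add0r ?addr0.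
Qed.

Lemma l1_ge0 b : 0 <= l1 b.
Proof. by apply: sumr_ge0 => j _. Qed.

Lemma l1_perturb b j t : l1 (perturb b j t) <= l1 b + `|t|.
Proof.
rewrite /l1 /perturb (bigD1 j) //= [X in _ <= X + _](bigD1 j) //= eqxx.
rewrite (eq_bigr (fun k => `|b k|)) => [|k /negbTE ->]; last by rewrite addr0.
by have := ler_normD (b j) t; lra.
Qed.

Lemma l1_restrC A d : l1 d = l1 (restr A d) + l1 (restr (~: A) d).
Proof.
rewrite /l1 -big_split /=; apply: eq_bigr => j _; rewrite /restr inE.
by case: (j \in A); rewrite normr0 ?addr0 ?add0r.
Qed.

Lemma l1_restr_le A d (z : R) :
  (forall j, j \in A -> `|d j| <= z) -> l1 (restr A d) <= #|A|%:R * z.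
Proof.
move=> le_dz; apply: le_trans (_ : \sum_(j < p) (if j \in A then z else 0) <= _).
  by apply: ler_sum => j _; rewrite /restr; case: ifP => [/le_dz|]; rewrite ?normr0.
by rewrite -big_mkcond /= sumr_const mulr_natl.
Qed.

Lemma linf_ge0 b : 0 <= linf b.
Proof. by apply: (big_ind (fun v => 0 <= v)) => // u v u0 v0; rewrite le_max u0. Qed.

Lemma ler_linf b j : `|b j| <= linf b.
Proof. by rewrite /linf (bigD1 j) //= le_max lexx. Qed.

Lemma linf_le b (z : R) : 0 <= z -> (forall j, `|b j| <= z) -> linf b <= z.
Proof.
move=> z0 le_bz; apply: (big_ind (fun v => v <= z)) => // u v uz vz.
by rewrite ge_max uz.
Qed.

Lemma linf_le_l2 b : linf b <= l2 b.
Proof.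
apply: linf_le => [|j]; first exact: sqrtr_ge0.
rewrite -sqrtr_sqr ler_wsqrtr // /l2 (bigD1 j) //= lerDl.
by apply: sumr_ge0 => k _; apply: sqr_ge0.
Qed.

Lemma supp_threshold b0 bh (t : R) :
  let z := linf (fun j => bh j - b0 j) in z <= t ->
  (forall j, j \in supp b0 -> z + t < `|b0 j|) ->
  supp b0 \subset supp bh /\ supp b0 = [set j | t < `|bh j|].
Proof.
move=> z z_le_t gap.
have t0 : 0 <= t by apply: le_trans z_le_t; apply: linf_ge0.
have dz j : `|bh j - b0 j| <= z by apply: (ler_linf (fun j => bh j - b0 j)).
have memT j : (j \in supp b0) = (t < `|bh j|).
  have := dz j; rewrite inE; have [b0j0|b0j] := eqVneq (b0 j) 0.
    by rewrite b0j0 subr0 ltNge => /le_trans ->.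
  have := gap j; rewrite inE b0j => /(_ isT).
  by have := lerB_dist (b0 j) (bh j); rewrite distrC; lra.
split; last by apply/finset.setP => j; rewrite memT inE.
apply/fintype.subsetP => j; rewrite memT inE; apply: contraTneq => ->.
by rewrite normr0 -leNgt.
Qed.

Lemma l2_eq0 b : (forall j, b j = 0) -> l2 b = 0.
Proof. by move=> b0; rewrite /l2 big1 ?sqrtr0 // => j _; rewrite b0 expr0n. Qed.

Lemma l1B_le_supp b0 bh :
  let d := fun j => bh j - b0 j in
  l1 b0 - l1 bh <= l1 (restr (supp b0) d) - l1 (restr (~: supp b0) d).
Proof.
rewrite /l1 -!sumrB; apply: ler_sum => j _; rewrite /restr !inE.
have [->|_] /= := eqVneq (b0 j) 0; last by rewrite normr0 subr0 distrC lerB_dist.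
by rewrite normr0 !subr0 sub0r.
Qed.

End Vectors.

Section Design.
Context {R : realType} {n p : nat} (x : 'I_n -> 'I_p -> R) (T : {set 'I_p}).
Implicit Types (d : 'I_p -> R).

Lemma kappaC_l1_le (C : R) d :
  l1 (restr (~: T) d) <= C * l1 (restr T d) ->
  kappaC x T C * l1 (restr T d) <= Num.sqrt #|T|%:R * norm2n x d.
Proof.
move=> cone; have [LT0|LT_neq0] := eqVneq (l1 (restr T d)) 0.
  by rewrite LT0 mulr0 mulr_ge0 ?sqrtr_ge0.
have LT_gt0 : 0 < l1 (restr T d) by rewrite lt_def LT_neq0 l1_ge0.
have [j jT dj] : exists2 j, j \in T & d j != 0.
  apply/exists_inP; apply: contra_neqT LT_neq0 => /exists_inPn dT0.
  rewrite /l1 big1 // => j _; rewrite /restr; case: ifP => [jT|_]; last exact: normr0.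
  by move/dT0: jT; rewrite negbK => /eqP ->; rewrite normr0.
rewrite -ler_pdivlMr //; apply: ge_inf; last by exists d; split => //; exists j.
exists 0 => _ [d' [_ _ ->]].
by rewrite divr_ge0 ?l1_ge0 // mulr_ge0 ?sqrtr_ge0.
Qed.

Lemma kappa_sp_l2_le (m : nat) d :
  (#|[set j in ~: T | d j != 0%R]| <= m)%N ->
  kappa_sp x T m * l2 d <= norm2n x d.
Proof.
move=> sparse.
have [/existsP[j dj]|/existsPn d0] := boolP [exists j, d j != 0]; last first.
  by rewrite l2_eq0 ?mulr0 ?sqrtr_ge0 // => j; apply/eqP/negPn/d0.
have l2_gt0 : 0 < l2 d.
  rewrite sqrtr_gt0 (bigD1 j) //= ltr_pwDl ?exprn_even_gt0 //=.
  by apply: sumr_ge0 => k _; apply: sqr_ge0.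
rewrite -ler_pdivlMr // -[_ / _]ger0_norm ?divr_ge0 ?sqrtr_ge0 ?(ltW l2_gt0) //.
rewrite -sqrtr_sqr /kappa_sp; apply: ler_wsqrtr; rewrite expr_div_n.
apply: ge_inf; last by exists d; split => //; exists j.
by exists 0 => _ [d' [_ _ ->]]; rewrite divr_ge0 ?sqr_ge0.
Qed.

Lemma coord_approx_incoherent (mu : R) d j : 0 <= mu ->
  En (fun i => x i j ^+ 2) = 1 ->
  (forall k l : 'I_p, (k < l)%N -> `|En (fun i => x i k * x i l)| <= mu) ->
  `|En (fun i => xdot x i d * x i j) - d j| <= mu * l1 d.
Proof.
move=> mu0 xj_normed incoh.
have gram : En (fun i => xdot x i d * x i j)
          = \sum_(k < p) En (fun i => x i j * x i k) * d k.
  rewrite (eq_bigr (fun k => En (fun i => d k * (x i j * x i k)))) => [|k _];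
    last by rewrite EnZ mulrC.
  by rewrite -En_sum; apply: eq_En => i; rewrite /xdot mulr_suml; apply: eq_bigr => k _; ring.
have off_diag k : k != j -> `|En (fun i => x i j * x i k)| <= mu.
  case: (ltngtP j k) => [/incoh //|kj _|/val_inj -> /eqP //].
  by rewrite (eq_En (fun i => mulrC (x i j) (x i k))) incoh.
rewrite gram (bigD1 j) //= (eq_En (fun i => esym (expr2 (x i j)))) xj_normed mul1r.
rewrite addrC addrK; apply: le_trans (ler_norm_sum _ _ _) _.
apply: le_trans (_ : _ <= \sum_(k < p | k != j) mu * `|d k|) _.
  by apply: ler_sum => k kj; rewrite normrM ler_wpM2r ?off_diag.
by rewrite -mulr_sumr ler_wpM2l // /l1 [X in _ <= X](bigD1 j) //= lerDr.
Qed.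

End Design.

Section LassoOptimality.
Context {R : realType} {n p : nat}.
Context {x : 'I_n -> 'I_p -> R} {y : 'I_n -> R} {betah : 'I_p -> R} {a : R}.
Hypothesis a_ge0 : 0 <= a.
Hypothesis lasso_opt : forall b : 'I_p -> R,
  En (fun i => (y i - xdot x i betah) ^+ 2) + a * l1 betah
  <= En (fun i => (y i - xdot x i b) ^+ 2) + a * l1 b.

Lemma lasso_basic_ineq (b0 : 'I_p -> R) :
  En (fun i => xdot x i (fun j => betah j - b0 j) ^+ 2)
  <= 2 * En (fun i => (y i - xdot x i b0) * xdot x i (fun j => betah j - b0 j))
     + a * (l1 b0 - l1 betah).
Proof.
have := lasso_opt b0.
rewrite (@eq_En _ _ _ (fun i => (y i - xdot x i b0
    - 1 * xdot x i (fun j => betah j - b0 j)) ^+ 2)) => [|i]; last by rewrite xdotB; ring.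
by rewrite En_sqrBZ expr1n !mul1r; lra.
Qed.

Lemma lasso_kkt j : En (fun i => x i j ^+ 2) = 1 ->
  `|En (fun i => (y i - xdot x i betah) * x i j)| <= a / 2.
Proof.
move=> xj_normed; apply: subgradient_norm_le => t.
have := lasso_opt (perturb betah j t).
rewrite (@eq_En _ _ (fun i => (y i - xdot x i (perturb betah j t)) ^+ 2)
    (fun i => (y i - xdot x i betah - t * x i j) ^+ 2)) => [|i];
  last by rewrite xdot_perturb; ring.
rewrite En_sqrBZ xj_normed mulr1.
by have := ler_wpM2l a_ge0 (l1_perturb betah j t); lra.
Qed.

End LassoOptimality.

Section OracleOptimality.
Context {R : realType} {n p : nat}.
Context {x : 'I_n -> 'I_p -> R} {f : 'I_n -> R} {beta0 : 'I_p -> R} {sigma : R}.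
Hypothesis x_normed : forall j, En (fun i => x i j ^+ 2) = 1.
Hypothesis oracle_opt : forall b : 'I_p -> R,
  En (fun i => (f i - xdot x i beta0) ^+ 2) + sigma ^+ 2 * (l0 beta0)%:R / n%:R
  <= En (fun i => (f i - xdot x i b) ^+ 2) + sigma ^+ 2 * (l0 b)%:R / n%:R.

Local Notation corr j := (En (fun i => (f i - xdot x i beta0) * x i j)).

Lemma oracle_perturb j t :
  sigma ^+ 2 * (l0 beta0)%:R / n%:R
  <= t ^+ 2 - 2 * t * corr j + sigma ^+ 2 * (l0 (perturb beta0 j t))%:R / n%:R.
Proof.
have := oracle_opt (perturb beta0 j t).
rewrite (@eq_En _ _ (fun i => (f i - xdot x i (perturb beta0 j t)) ^+ 2)
    (fun i => (f i - xdot x i beta0 - t * x i j) ^+ 2)) => [|i];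
  last by rewrite xdot_perturb; ring.
by rewrite En_sqrBZ x_normed mulr1; lra.
Qed.

Lemma oracle_corr_supp j : beta0 j != 0 -> corr j = 0.
Proof.
move=> b0j; apply/eqP; apply/negPn/negP => corr_neq0.
have corr2 : 0 < corr j ^+ 2 by rewrite exprn_even_gt0.
(* [t = corr j] keeps the support of beta0 unless it cancels [beta0 j];
   then [t = corr j / 2] does *)
have [b0jt|b0jt] := eqVneq (beta0 j + corr j) 0.
  have b0jt2 : beta0 j + corr j / 2 != 0.
    by apply: contra_neq corr_neq0; move: b0jt; lra.
  by have := oracle_perturb j (corr j / 2); rewrite /l0 supp_perturb_in //; nra.
by have := oracle_perturb j (corr j); rewrite /l0 supp_perturb_in //; nra.
Qed.

Lemma oracle_corr_off j : beta0 j = 0 -> corr j ^+ 2 <= sigma ^+ 2 / n%:R.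
Proof.
move=> b0j; have [->|corr_neq0] := eqVneq (corr j) 0.
  by rewrite expr0n divr_ge0 ?sqr_ge0.
have := oracle_perturb j (corr j).
have jT : j \notin supp beta0 by rewrite inE b0j eqxx.
rewrite /l0 supp_perturb_out // cardsU1 jT add1n -[#|_|.+1%:R]natr1.
by rewrite mulrDr mulrDl mulr1; lra.
Qed.

Lemma oracle_corr_le j : 0 <= sigma ->
  `|corr j| <= Num.min (sigma / Num.sqrt n%:R)
                       (Num.sqrt (En (fun i => (f i - xdot x i beta0) ^+ 2))).
Proof.
move=> sigma0; have sn0 : 0 <= sigma / Num.sqrt n%:R by rewrite divr_ge0 ?sqrtr_ge0.
rewrite le_min; apply/andP; split.
  have [b0j|b0j] := eqVneq (beta0 j) 0; last by rewrite oracle_corr_supp ?normr0.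
  apply: norm_le_of_sqr_le => //.
  by rewrite [X in _ <= X]expr_div_n sqr_sqrtr ?ler0n // oracle_corr_off.
apply: norm_le_of_sqr_le; first exact: sqrtr_ge0.
by rewrite sqr_sqrtr ?En_sqr_ge0 // -[X in _ <= X]mulr1 -(x_normed j) En_mul_sqr_le.
Qed.

End OracleOptimality.

Section LassoError.
Context {R : realType} {n p : nat}.
Context {x : 'I_n -> 'I_p -> R} {f eps : 'I_n -> R} {beta0 betah : 'I_p -> R}.
Context {a c : R}.
Hypothesis a_gt0 : 0 < a.
Hypothesis c_gt1 : 1 < c.
Hypothesis lasso_opt : forall b : 'I_p -> R,
  En (fun i => (f i + eps i - xdot x i betah) ^+ 2) + a * l1 betah
  <= En (fun i => (f i + eps i - xdot x i b) ^+ 2) + a * l1 b.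
Hypothesis noise_le : c * linf (fun j => 2 * En (fun i => x i j * eps i)) <= a.

Local Notation T := (supp beta0).
Local Notation d := (fun j => betah j - beta0 j).
Local Notation u i := (xdot x i (fun j => betah j - beta0 j)).
Local Notation r i := (f i - xdot x i beta0).
Local Notation LT := (l1 (restr T d)).
Local Notation LC := (l1 (restr (~: T) d)).
Local Notation Sinf := (linf (fun j => 2 * En (fun i => x i j * eps i))).

Lemma noise_corr_le : 2 * En (fun i => eps i * u i) <= Sinf * l1 d.
Proof.
have -> : En (fun i => eps i * u i) = \sum_(j < p) d j * En (fun i => x i j * eps i).
  rewrite (eq_bigr (fun j => En (fun i => d j * (x i j * eps i)))) => [|j _];
    last by rewrite EnZ.
  by rewrite -En_sum; apply: eq_En => i; rewrite /xdot mulr_sumr; apply: eq_bigr => j _; ring.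
rewrite mulr_sumr /l1 mulr_sumr; apply: ler_sum => j _.
rewrite mulrCA; apply: le_trans (ler_norm _) _.
by rewrite normrM mulrC ler_wpM2r // (ler_linf (fun j => 2 * En (fun i => x i j * eps i))).
Qed.

Lemma lasso_cone_ineq :
  c * (En (fun i => u i ^+ 2) - 2 * En (fun i => r i * u i))
  <= a * ((c + 1) * LT - (c - 1) * LC).
Proof.
have basic := lasso_basic_ineq lasso_opt beta0.
rewrite (@eq_En _ _ (fun i => (f i + eps i - xdot x i beta0) * u i)
               (fun i => r i * u i + eps i * u i)) ?EnD in basic; last by move=> i; ring.
have noise := noise_corr_le; rewrite (l1_restrC T) in noise.
have l1B := ler_wpM2l (ltW a_gt0) (l1B_le_supp beta0 betah).
have Sinf_l1 : c * Sinf * (LT + LC) <= a * (LT + LC).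
  by rewrite ler_wpM2r ?addr_ge0 ?l1_ge0.
have c0 : 0 <= c by have := c_gt1; lra.
have excess : En (fun i => u i ^+ 2) - 2 * En (fun i => r i * u i)
              <= Sinf * (LT + LC) + a * (LT - LC).
  by lra.
by have := ler_wpM2l c0 excess; lra.
Qed.

Local Notation cbar := ((c + 1) / (c - 1)).
Local Notation kC := (kappaC x T cbar).
Local Notation cs := (Num.sqrt (En (fun i => r i ^+ 2))).

Lemma lasso_excess_le : 0 < kC ->
  En (fun i => u i ^+ 2) - 2 * En (fun i => r i * u i)
  <= (1 + c^-1) * a * (Num.sqrt #|T|%:R * norm2n x d / kC).
Proof.
move=> kC_gt0; have c0 : 0 < c by have := c_gt1; lra.
have cone := lasso_cone_ineq.
have LC0 := l1_ge0 (restr (~: T) d).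
have rhs0 : 0 <= (1 + c^-1) * a * (Num.sqrt #|T|%:R * norm2n x d / kC).
  rewrite mulr_ge0 ?mulr_ge0 ?invr_ge0 ?sqrtr_ge0 ?(ltW kC_gt0) ?(ltW a_gt0) //.
  by rewrite addr_ge0 ?invr_ge0 ?ltW.
have [in_cone|] := leP LC (cbar * LT); last first.
  move=> out_cone; have c1_gt0 : 0 < c - 1 by have := c_gt1; lra.
  have : (c + 1) * LT <= (c - 1) * LC.
    rewrite (_ : (c + 1) * LT = (c - 1) * (cbar * LT)) ?ler_pM2l ?(ltW out_cone) //.
    by field; rewrite gt_eqF.
  rewrite -subr_le0 -(pmulr_rle0 _ a_gt0) => /(le_trans cone).
  by rewrite pmulr_rle0 // => excess_le0; apply: le_trans rhs0.
have LT_le : LT <= Num.sqrt #|T|%:R * norm2n x d / kC.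
  by rewrite ler_pdivlMr // mulrC kappaC_l1_le.
apply: le_trans (ler_wpM2l _ LT_le); last by rewrite mulr_ge0 ?addr_ge0 ?invr_ge0 ?ltW.
rewrite -(ler_pM2l c0); apply: le_trans cone _.
rewrite (_ : c * _ = a * ((c + 1) * LT)); last by field; rewrite gt_eqF.
by rewrite ler_pM2l // gerDl oppr_le0 mulr_ge0 //; have := c_gt1; lra.
Qed.

Lemma lasso_pred_err_le : 0 < kC ->
  norm2n x d <= 2 * cs + (1 + c^-1) * a * Num.sqrt #|T|%:R / kC.
Proof.
move=> kC_gt0; set D := norm2n x d; set M := _ + _.
have D0 : 0 <= D := sqrtr_ge0 _.
have D2 : D ^+ 2 = En (fun i => u i ^+ 2) by rewrite sqr_sqrtr ?En_sqr_ge0.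
have corr_le : En (fun i => r i * u i) <= cs * D := En_mul_le _ _.
have excess := lasso_excess_le kC_gt0; rewrite -/D in excess.
have M0 : 2 * cs <= M.
  rewrite lerDl !mulr_ge0 ?invr_ge0 ?sqrtr_ge0 ?(ltW kC_gt0) ?(ltW a_gt0) //.
  by rewrite addr_ge0 ?invr_ge0 //; have := c_gt1; lra.
have DM : D ^+ 2 <= D * M.
  rewrite D2 (_ : D * M = 2 * (cs * D) + (1 + c^-1) * a * (Num.sqrt #|T|%:R * D / kC)).
    by lra.
  by rewrite /M; ring.
have cs0 : 0 <= cs := sqrtr_ge0 _.
nra.
Qed.

Lemma lasso_linf_err_le_re :
  0 < kC ->
  linf d * kappa_sp x T #|supp betah :\: T|
  <= 2 * cs + (1 + c^-1) * a * Num.sqrt #|T|%:R / kC.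
Proof.
move=> kC_gt0; apply: le_trans (lasso_pred_err_le kC_gt0).
apply: le_trans (_ : kappa_sp x T #|supp betah :\: T| * l2 d <= _); last first.
  apply: kappa_sp_l2_le; apply/subset_leq_card/fintype.subsetP => j.
  by rewrite !inE => /andP[/negPn/eqP ->]; rewrite subr0 eqxx.
by rewrite mulrC ler_wpM2l ?sqrtr_ge0 ?linf_le_l2.
Qed.

Lemma cbar_ge1 : 1 <= cbar.
Proof. by rewrite ler_pdivlMr ?mul1r; have := c_gt1; lra. Qed.

Context {sigma U : R}.
Hypothesis x_normed : forall j, En (fun i => x i j ^+ 2) = 1.
Hypothesis incoherent : forall j k : 'I_p, (j < k)%N ->
  `|En (fun i => x i j * x i k)| <= 1 / (U * #|T|%:R).
Hypothesis U_gt : 5 * cbar < U.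

Local Notation mu := (1 / (U * #|T|%:R)).
Local Notation corr j := (En (fun i => r i * x i j)).
Local Notation Y := (Sinf / 2 + a / 2 + mu * l1 d).

Lemma mu_ge0 : 0 <= mu.
Proof.
rewrite divr_ge0 ?mulr_ge0 ?ler0n //; apply: le_trans (ltW U_gt).
by rewrite mulr_ge0 // (le_trans ler01 cbar_ge1).
Qed.

Lemma lasso_coord_err_le j : `|d j| <= `|corr j| + Y.
Proof.
set Ee := En (fun i => x i j * eps i); set Eu := En (fun i => u i * x i j).
set H := En (fun i => (f i + eps i - xdot x i betah) * x i j).
have kkt : `|H| <= a / 2 := lasso_kkt (ltW a_gt0) lasso_opt j (x_normed j).
have approx : `|Eu - d j| <= mu * l1 d :=
  coord_approx_incoherent x _ d j mu_ge0 (x_normed j) incoherent.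
have noise_j : `|Ee| <= Sinf / 2.
  have := ler_linf (fun j => 2 * En (fun i => x i j * eps i)) j.
  by rewrite normrM ger0_norm //; lra.
have split_resid : H = corr j + Ee - Eu.
  by rewrite -EnD -EnB; apply: eq_En => i; rewrite xdotB; ring.
have -> : betah j - beta0 j = corr j + Ee - H - (Eu - d j) by rewrite split_resid; ring.
have := ler_normB (corr j + Ee - H) (Eu - d j).
have := ler_normB (corr j + Ee) H; have := ler_normD (corr j) Ee.
lra.
Qed.

Hypothesis sigma_ge0 : 0 <= sigma.
Hypothesis oracle_opt : forall b : 'I_p -> R,
  En (fun i => r i ^+ 2) + sigma ^+ 2 * (l0 beta0)%:R / n%:R
  <= En (fun i => (f i - xdot x i b) ^+ 2) + sigma ^+ 2 * (l0 b)%:R / n%:R.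

Lemma lasso_offsupp_l1_le : LC <= cbar * LT + cbar * (cs ^+ 2 / a).
Proof.
have c1_gt0 : 0 < c - 1 by have := c_gt1; lra.
have excess_ge : - cs ^+ 2 <= En (fun i => u i ^+ 2) - 2 * En (fun i => r i * u i).
  rewrite sqr_sqrtr ?En_sqr_ge0 //.
  by have := En_sqr_ge0 (fun i => r i - 1 * u i); rewrite En_sqrBZ; lra.
have := le_trans (ler_wpM2l (ltW (lt_trans ltr01 c_gt1)) excess_ge) lasso_cone_ineq.
move=> cone; rewrite -(ler_pM2l (mulr_gt0 a_gt0 c1_gt0)).
rewrite (_ : _ * (cbar * LT + _) = a * ((c + 1) * LT) + (c + 1) * cs ^+ 2).
  by have := sqr_ge0 cs; nra.
by field; rewrite !gt_eqF.
Qed.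

Lemma lasso_err_level_fixpoint : (0 < #|T|)%N ->
  Y <= a + ((1 + cbar) * Y + cbar * (cs ^+ 2 / a) / #|T|%:R) / U.
Proof.
move=> T_gt0; have s_gt0 : 0 < #|T|%:R :> R by rewrite ltr0n.
have c1_gt0 : 0 < c - 1 by have := c_gt1; lra.
have U_gt0 : 0 < U by apply: le_lt_trans U_gt; rewrite mulr_ge0 ?(le_trans ler01 cbar_ge1).
have LT_le : LT <= #|T|%:R * Y.
  apply: l1_restr_le => j; rewrite inE => /(oracle_corr_supp x_normed oracle_opt).
  by move: (lasso_coord_err_le j) => /[swap] ->; rewrite normr0 add0r.
have l1d_le : l1 d <= #|T|%:R * ((1 + cbar) * Y + cbar * (cs ^+ 2 / a) / #|T|%:R).
  have -> : #|T|%:R * ((1 + cbar) * Y + cbar * (cs ^+ 2 / a) / #|T|%:R)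
            = (1 + cbar) * (#|T|%:R * Y) + cbar * (cs ^+ 2 / a).
    by field; rewrite !gt_eqF.
  rewrite {1}(l1_restrC T); have := lasso_offsupp_l1_le.
  have := ler_wpM2l (addr_ge0 ler01 (le_trans ler01 cbar_ge1)) LT_le.
  lra.
have mu_s : mu * #|T|%:R = U^-1 by field; rewrite !gt_eqF.
have Sinf_le : Sinf <= a.
  by apply: le_trans noise_le; rewrite ler_peMl ?linf_ge0 ?ltW.
apply: lerD; first lra.
by apply: le_trans (ler_wpM2l mu_ge0 l1d_le) _; rewrite mulrA mu_s mulrC.
Qed.

Lemma lasso_linf_err_le_incoherent : (0 < #|T|)%N ->
  linf d <= a * ((U + cbar) / (U - 5 * cbar)) + Num.min (sigma / Num.sqrt n%:R) cs
            + 4 * cbar / U * a^-1 * (cs ^+ 2 / #|T|%:R).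
Proof.
move=> T_gt0; set B := cbar * (cs ^+ 2 / a) / #|T|%:R.
have B_ge0 : 0 <= B.
  apply: divr_ge0 (ler0n _ _); apply: mulr_ge0 (le_trans ler01 cbar_ge1) _.
  by rewrite divr_ge0 ?sqr_ge0 ?ltW.
have Y_le :=
  le_fixpoint_bound cbar_ge1 U_gt (ltW a_gt0) B_ge0 (lasso_err_level_fixpoint T_gt0).
have min_ge0 : 0 <= Num.min (sigma / Num.sqrt n%:R) cs.
  by rewrite le_min divr_ge0 ?sqrtr_ge0.
have Y_ge0 : 0 <= Y.
  apply: addr_ge0 (mulr_ge0 mu_ge0 (l1_ge0 _)).
  by rewrite addr_ge0 ?divr_ge0 ?linf_ge0 ?ler0n ?(ltW a_gt0).
have coord_le j : `|d j| <= Num.min (sigma / Num.sqrt n%:R) cs + Y.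
  apply: le_trans (lasso_coord_err_le j) _.
  by rewrite lerD2r oracle_corr_le.
apply: le_trans (linf_le _ _ (addr_ge0 min_ge0 Y_ge0) coord_le) _.
have -> : 4 * cbar / U * a^-1 * (cs ^+ 2 / #|T|%:R) = 4 * B / U by rewrite /B; ring.
lra.
Qed.

End LassoError.

Theorem lemma3 (R : realType) (n p : nat) (x : 'I_n -> 'I_p -> R)
  (f eps : 'I_n -> R) (sigma K : R) (beta0 betah : 'I_p -> R) (lambda c : R) :
  (0 < n)%N -> 0 < sigma ->
  (exists j : 'I_p, forall i, x i j = 1) ->
  (forall j : 'I_p, En (fun i => x i j ^+ 2) = 1) ->
  (forall b : 'I_p -> R,
     En (fun i => (f i - xdot x i beta0) ^+ 2) + sigma ^+ 2 * (l0 beta0)%:R / n%:R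
     <= En (fun i => (f i - xdot x i b) ^+ 2) + sigma ^+ 2 * (l0 b)%:R / n%:R) ->
  0 < K ->
  Num.sqrt (En (fun i => (f i - xdot x i beta0) ^+ 2))
    <= K * sigma * Num.sqrt ((l0 beta0)%:R / n%:R) ->
  0 < lambda ->
  (forall b : 'I_p -> R,
     En (fun i => (f i + eps i - xdot x i betah) ^+ 2) + lambda / n%:R * l1 betah
     <= En (fun i => (f i + eps i - xdot x i b) ^+ 2) + lambda / n%:R * l1 b) ->
  1 < c ->
  let T := supp beta0 in
  let s := l0 beta0 in
  let cs := Num.sqrt (En (fun i => (f i - xdot x i beta0) ^+ 2)) in
  let Th := supp betah in
  let zeta := linf (fun j => betah j - beta0 j) in
  let mh := #|Th :\: T| in
  let cbar := (c + 1) / (c - 1) in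
  let Sinf := linf (fun j => 2 * En (fun i => x i j * eps i)) in
  (forall t : R, zeta <= t ->
     (forall j, j \in T -> zeta + t < `|beta0 j|) ->
     T \subset Th /\ T = [set j | t < `|betah j|]) /\
  (c * n%:R * Sinf <= lambda -> (0 < s)%N ->
     0 < kappaC x T cbar -> 0 < kappa_sp x T mh ->
     zeta <= (1 + c^-1) * (lambda * Num.sqrt s%:R)
               / (n%:R * kappaC x T cbar * kappa_sp x T mh)
             + 2 * cs / kappa_sp x T mh) /\
  (forall U : R, c * n%:R * Sinf <= lambda -> (0 < s)%N -> 5 * cbar < U ->
     (forall j k : 'I_p, (j < k)%N ->
        `|En (fun i => x i j * x i k)| <= 1 / (U * s%:R)) ->
     zeta <= lambda / n%:R * ((U + cbar) / (U - 5 * cbar))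
             + Num.min (sigma / Num.sqrt n%:R) cs
             + 6 * cbar / (U - 5 * cbar) * (cs / Num.sqrt s%:R)
             + 4 * cbar / U * (n%:R / lambda) * (cs ^+ 2 / s%:R)).
Proof.
move=> n_gt0 sigma_gt0 _ x_normed oracle_opt _ _ lambda_gt0 lasso_opt c_gt1
  T s cs Th zeta mh cbar Sinf.
have n_pos : 0 < n%:R :> R by rewrite ltr0n.
have a_gt0 : 0 < lambda / n%:R by rewrite divr_gt0.
have noise_le : c * n%:R * Sinf <= lambda -> c * Sinf <= lambda / n%:R.
  by rewrite ler_pdivlMr // mulrAC.
split; first exact: supp_threshold.
split=> [/noise_le noise _ kC_gt0 kS_gt0|U /noise_le noise T_gt0 U_gt incoh].
  have c_gt0 : 0 < c by lra.
  rewrite [X in _ <= X](_ : _ = (2 * cs + (1 + c^-1) * (lambda / n%:R) * Num.sqrt s%:R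
                                   / kappaC x T cbar) / kappa_sp x T mh).
    by rewrite ler_pdivlMr //; exact: lasso_linf_err_le_re a_gt0 c_gt1 lasso_opt noise kC_gt0.
  by rewrite /s /l0 /cs /T /mh /Th /cbar; field; rewrite !gt_eqF.
have cbar_gt0 : 0 < cbar by rewrite divr_gt0 //; lra.
have extra_ge0 : 0 <= 6 * cbar / (U - 5 * cbar) * (cs / Num.sqrt s%:R).
  apply: mulr_ge0; last by rewrite divr_ge0 ?sqrtr_ge0.
  apply: divr_ge0 (mulr_ge0 (ler0n _ 6) (ltW cbar_gt0)) _.
  by rewrite subr_ge0 ltW.
have := lasso_linf_err_le_incoherent a_gt0 c_gt1 lasso_opt noise x_normed incoh U_gt
  (ltW sigma_gt0) oracle_opt T_gt0.
rewrite -[n%:R / lambda]invf_div /cbar /s /l0 /cs /zeta in extra_ge0 *; lra.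
Qed.
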